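(* Let $n$ be a nonnegative integer and $0<\pi<1$. Let $(Y,T)$ be the pair of random variables with joint probability mass function $$P(Y=k,T=t)=\#\mathcal{P}_{k,n-k}(t)\,(1-\pi)^{n-k}\pi^k$$ for $k=0,1,\dots,n$ and $t=0,1,\dots,k(n-k)$, and $0$ otherwise. Then $$E(YT)=\binom{n}{2}\pi(1-\pi)\bigl(\pi(n-2)+1\bigr),\qquad \operatorname{Cov}(Y,T)=\binom{n}{2}\pi(1-\pi)(1-2\pi).$$
   Context: For integers $k\ge0$ and $m\ge 0$, $\#\mathcal{P}_{k,m}(t)$ denotes the number of integer tuples $(\lambda_1,\dots,\lambda_k)$ with $m\ge\lambda_1\ge\cdots\ge\lambda_k\ge0$ and $\lambda_1+\cdots+\lambda_k=t$. Interpretation: in $n$ independent Bernoulli trials each with success probability $\pi$, $Y$ is the number of successes and $T$ is the number of pairs (success, later failure) in the outcome sequence. *)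

From mathcomp Require Import all_boot all_order all_algebra.
Set Implicit Arguments. Unset Strict Implicit. Unset Printing Implicit Defensive.
Import Order.TTheory GRing.Theory Num.Theory.

Definition nbox (k m t : nat) : nat :=
  #|[set f : {ffun 'I_k -> 'I_m.+1} |
      [forall i : 'I_k, forall j : 'I_k, (i <= j)%N ==> (f j <= f i)%N]
      && ((\sum_(i < k) (f i : nat))%N == t)]|.

Local Open Scope ring_scope.

Definition pmfYT (R : realFieldType) (n : nat) (p : R) (k t : nat) : R :=
  if (k <= n)%N && (t <= k * (n - k))%N
  then (nbox k (n - k) t)%:R * (1 - p) ^+ (n - k) * p ^+ k
  else 0.

(* Expectations: the pmf vanishes outside k <= n, t <= k(n-k) <= n*n,
   so sums over k < n+1, t < n*n+1 range over the whole support. *)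
Definition E_YT (R : realFieldType) (n : nat) (p : R) : R :=
  \sum_(k < n.+1) \sum_(t < (n * n).+1) (k * t)%:R * pmfYT n p k t.
Definition E_Y (R : realFieldType) (n : nat) (p : R) : R :=
  \sum_(k < n.+1) \sum_(t < (n * n).+1) k%:R * pmfYT n p k t.
Definition E_T (R : realFieldType) (n : nat) (p : R) : R :=
  \sum_(k < n.+1) \sum_(t < (n * n).+1) t%:R * pmfYT n p k t.
Definition Cov_YT (R : realFieldType) (n : nat) (p : R) : R :=
  E_YT n p - E_Y n p * E_T n p.

From mathcomp Require Import all_boot all_order all_algebra.
From mathcomp Require Import ring.
Import Order.TTheory GRing.Theory Num.Theory.

(* Given Y = k, the weight of T = t is the number of partitions of t fitting in a
   k x (n - k) box.  There are 'C(n, k) such partitions, so Y is binomial; and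
   complementing a partition inside the box is an involution sending size t to
   k (n - k) - t, so T has conditional mean k (n - k) / 2.  Hence E(T) and E(YT)
   are expectations of polynomials in Y of degree at most 3, which the factorial
   moments E(Y ^_ j) = n ^_ j p ^ j of the binomial law evaluate. *)

Lemma pairwise_enum_ord k (r : rel 'I_k) :
  pairwise r (enum 'I_k) = [forall i : 'I_k, forall j : 'I_k, (i < j)%N ==> r i j].
Proof.
case: k r => [|k] r; first by rewrite enum_ord0; apply/esym/forallP => -[].
have nth_enumE l (lt_lk : (l < k.+1)%N) : nth ord0 (enum 'I_k.+1) l = Ordinal lt_lk.
  by apply: val_inj; rewrite /= nth_enum_ord.
apply/(pairwiseP ord0)/forallP => [r_lt i | r_lt i j]; last first.
  rewrite !inE size_enum_ord => ilt jlt; rewrite !nth_enumE.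
  by move=> ij; have /forallP/(_ (Ordinal jlt))/implyP := r_lt (Ordinal ilt); apply.
apply/forallP => j; apply/implyP => ij.
by have := r_lt i j; rewrite !inE size_enum_ord !nth_ord_enum; exact.
Qed.

Section BoxPartitions.

Set Implicit Arguments.

Variables k m : nat.
Implicit Types f : {ffun 'I_k -> 'I_m.+1}.

Definition nonincr f := [forall i : 'I_k, forall j : 'I_k, (i <= j)%N ==> (f j <= f i)%N].

Definition ffsum f := (\sum_(i < k) (f i : nat))%N.

Lemma nonincrE f : nonincr f = [forall i : 'I_k, forall j : 'I_k, (i < j)%N ==> (f j <= f i)%N].
Proof.
apply/forallP/forallP => le_f i; apply/forallP => j; apply/implyP => ij;
  have /implyP le_fij := forallP (le_f i) j.
  exact: le_fij (ltnW ij).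
by case: ltngtP ij => [/le_fij | | /val_inj ->].
Qed.

Lemma ffsum_le f : (ffsum f <= k * m)%N.
Proof.
rewrite /ffsum -[k in (k * m)%N]card_ord -sum_nat_const.
by apply: leq_sum => i _; rewrite -ltnS.
Qed.

Definition ffcompl f : {ffun 'I_k -> 'I_m.+1} := [ffun i => rev_ord (f (rev_ord i))].

Lemma ffcomplK : involutive ffcompl.
Proof. by move=> f; apply/ffunP => i; rewrite !ffunE !rev_ordK. Qed.

Lemma nonincr_compl f : nonincr (ffcompl f) = nonincr f.
Proof.
suff imp g : nonincr g -> nonincr (ffcompl g).
  by apply/idP/idP => /imp //; rewrite ffcomplK.
move=> /forallP le_g; apply/forallP => i; apply/forallP => j; apply/implyP => ij.
rewrite !ffunE /= leq_sub2l //.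
by apply: (implyP (forallP (le_g _) _)); rewrite /= leq_sub2l.
Qed.

Lemma ffsum_compl f : (ffsum f + ffsum (ffcompl f) = k * m)%N.
Proof.
rewrite /ffsum (reindex_inj rev_ord_inj) -big_split /=.
rewrite -[k in (k * m)%N]card_ord -sum_nat_const; apply: eq_bigr => i _.
by rewrite ffunE /= subnKC // -ltnS.
Qed.

Lemma card_nonincr : #|[set f | nonincr f]| = 'C(k + m, k).
Proof.
pose rev_tuple f : k.-tuple 'I_m.+1 := [tuple rev_ord (f i) | i < k].
pose rev_ffun (t : k.-tuple 'I_m.+1) := [ffun i => rev_ord (tnth t i)].
have rev_tupleK : cancel rev_tuple rev_ffun.
  by move=> f; apply/ffunP => i; rewrite ffunE tnth_mktuple rev_ordK.
have rev_ffunK : cancel rev_ffun rev_tuple.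
  by move=> t; apply/eq_from_tnth => i; rewrite tnth_mktuple ffunE rev_ordK.
rewrite -card_sorted_tuples -(card_imset _ (can_inj rev_tupleK)).
rewrite (can2_imset_pre _ rev_tupleK rev_ffunK); apply: eq_card => t.
rewrite !inE -[t in RHS]rev_ffunK; move: (rev_ffun t) => {t} f.
rewrite /= -map_comp sorted_map sorted_pairwise; last by move=> ? ? ?; exact: leq_trans.
rewrite pairwise_enum_ord nonincrE; apply: eq_forallb => i; apply: eq_forallb => j.
by rewrite /= !subSS leq_sub2lE // -ltnS.
Qed.

Lemma sum_ffsum_nonincr :
  (2 * \sum_(f | nonincr f) ffsum f = k * m * 'C(k + m, k))%N.
Proof.
rewrite mul2n -addnn {2}(reindex_inj (inv_inj ffcomplK)) /=.
rewrite (eq_bigl _ _ nonincr_compl) -big_split /=.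
rewrite (eq_bigr (fun=> k * m)%N) => [|f _]; last exact: ffsum_compl.
rewrite sum_nat_const mulnC -card_nonincr; congr (_ * _)%N.
by apply: eq_card => f; rewrite inE.
Qed.

End BoxPartitions.

Local Open Scope ring_scope.

Lemma nbox_eq0 k m t : (k * m < t)%N -> nbox k m t = 0%N.
Proof.
move=> lt_kmt; apply: eq_card0 => f; rewrite inE; apply/andP => -[_ /eqP sum_t].
by have := ffsum_le f; rewrite /ffsum sum_t leqNgt lt_kmt.
Qed.

Lemma sum_nbox (R : nmodType) k m B (g : nat -> R) : (k * m < B)%N ->
  \sum_(t < B) g t *+ nbox k m t =
  \sum_(f : {ffun 'I_k -> 'I_m.+1} | nonincr f) g (ffsum f).
Proof.
move=> lt_kmB; have lt_sumB f : (ffsum f < B)%N := leq_ltn_trans (ffsum_le f) lt_kmB.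
rewrite (partition_big (fun f => Ordinal (lt_sumB f)) xpredT) //=.
apply: eq_bigr => t _; rewrite (eq_bigr (fun=> g t)) => [|f /andP[_ /eqP <-] //].
by rewrite /nbox -sumr_const; apply: eq_bigl => f; rewrite inE -val_eqE.
Qed.

Lemma sum_nonincr_const (V : nmodType) k m (x : V) :
  \sum_(f : {ffun 'I_k -> 'I_m.+1} | nonincr f) x = x *+ 'C(k + m, k).
Proof. by rewrite -card_nonincr -sumr_const; apply: eq_bigl => f; rewrite inE. Qed.

Lemma natr_ffactSr (R : pzRingType) n j :
  (n ^_ j.+1)%:R = (n ^_ j)%:R * (n%:R - j%:R) :> R.
Proof.
have [lt_nj | le_jn] := ltnP n j; last by rewrite ffactnSr natrM natrB.
by rewrite !ffact_small ?mul0r // ltnW.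
Qed.

Definition binomial_pmf {R : pzRingType} n (p : R) k :=
  'C(n, k)%:R * ((1 - p) ^+ (n - k) * p ^+ k).

Lemma sum_ffact_binomial_pmf (R : comPzRingType) n (p : R) j :
  \sum_(k < n.+1) (k ^_ j)%:R * binomial_pmf n p k = (n ^_ j)%:R * p ^+ j.
Proof.
elim: j n => [|j IHj] [|n].
- by rewrite big_ord1 /binomial_pmf /= !mul1r.
- rewrite expr0 mulr1; transitivity ((1 - p + p) ^+ n.+1); last by rewrite subrK expr1n.
  by rewrite exprDn; apply: eq_bigr => k _; rewrite ffactn0 mul1r /binomial_pmf mulr_natl.
- by rewrite big_ord1 /= !mul0r.
rewrite big_ord_recl /= mul0r add0r ffactSS natrM.
have -> : n.+1%:R * (n ^_ j)%:R * p ^+ j.+1 = n.+1%:R * p * ((n ^_ j)%:R * p ^+ j).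
  by rewrite exprS; ring.
rewrite -IHj mulr_sumr.
apply: eq_bigr => k _; rewrite /bump /= add1n ffactSS /binomial_pmf exprS !subSS.
have binE : (k.+1 * k ^_ j * 'C(n.+1, k.+1) = n.+1 * ('C(n, k) * k ^_ j))%N.
  by rewrite mulnAC -mul_bin_diag -mulnA.
have binE_R := congr1 (fun x => x%:R : R) binE; rewrite /= !natrM in binE_R.
by rewrite natrM !mulrA binE_R; ring.
Qed.

Section JointLaw.

Variables (R : realFieldType) (n : nat) (p : R).

Lemma sum_pmfYT_row k (g : nat -> R) : (k <= n)%N ->
  \sum_(t < (n * n).+1) g t * pmfYT n p k t =
  (1 - p) ^+ (n - k) * p ^+ k *
    \sum_(f : {ffun 'I_k -> 'I_(n - k).+1} | nonincr f) g (ffsum f).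
Proof.
move=> le_kn; rewrite -(@sum_nbox R k (n - k) (n * n).+1) ?ltnS ?leq_mul ?leq_subr // mulr_sumr.
apply: eq_bigr => t _; rewrite /pmfYT le_kn /=.
have [_ | lt_t] := leqP; first by rewrite -mulr_natr; ring.
by rewrite nbox_eq0 // mulr0n !mulr0.
Qed.

Lemma sum_pmfYT_row1 k : (k <= n)%N ->
  \sum_(t < (n * n).+1) pmfYT n p k t = binomial_pmf n p k.
Proof.
move=> le_kn; have := sum_pmfYT_row k (fun=> 1) le_kn.
under eq_bigr do rewrite mul1r.
by move=> ->; rewrite sum_nonincr_const subnKC // mulrC.
Qed.

Lemma sum_pmfYT_rowT k : (k <= n)%N ->
  \sum_(t < (n * n).+1) t%:R * pmfYT n p k t =
  (k * (n - k))%:R / 2 * binomial_pmf n p k.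
Proof.
move=> le_kn; rewrite sum_pmfYT_row //.
have two_sum : 2 * \sum_(f : {ffun 'I_k -> 'I_(n - k).+1} | nonincr f) (ffsum f)%:R
               = (k * (n - k) * 'C(n, k))%:R :> R.
  by rewrite -natr_sum -natrM sum_ffsum_nonincr subnKC.
have two_neq0 : 2 != 0 :> R by rewrite pnatr_eq0.
rewrite -[\sum_(_ | _) _](mulKf two_neq0) two_sum /binomial_pmf natrM.
ring.
Qed.

Lemma E_Y_eq : E_Y n p = n%:R * p.
Proof.
rewrite /E_Y (eq_bigr (fun k : 'I_n.+1 => (k ^_ 1)%:R * binomial_pmf n p k)) => [|k _].
  by rewrite sum_ffact_binomial_pmf ffactn1 expr1.
by rewrite ffactn1 -mulr_sumr sum_pmfYT_row1 ?leq_ord.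
Qed.

Lemma natr_bin2 : 'C(n, 2)%:R = (n ^_ 2)%:R / 2 :> R.
Proof. by rewrite -bin_ffact natrM mulfK // pnatr_eq0. Qed.

Lemma sum_ffact3_binomial_pmf (a b c : R) :
  \sum_(k < n.+1) (a * (k ^_ 1)%:R + b * (k ^_ 2)%:R + c * (k ^_ 3)%:R) * binomial_pmf n p k
  = a * (n ^_ 1)%:R * p + b * (n ^_ 2)%:R * p ^+ 2 + c * (n ^_ 3)%:R * p ^+ 3.
Proof.
under eq_bigr do rewrite !mulrDl -!mulrA.
by rewrite !big_split -!mulr_sumr !sum_ffact_binomial_pmf expr1 !mulrA.
Qed.

Lemma E_T_eq : E_T n p = 'C(n, 2)%:R * p * (1 - p).
Proof.
rewrite /E_T; under eq_bigr => k _ do rewrite (sum_pmfYT_rowT _ (leq_ord k)).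
transitivity (\sum_(k < n.+1)
  ((n%:R - 1) / 2 * (k ^_ 1)%:R + - 2^-1 * (k ^_ 2)%:R + 0 * (k ^_ 3)%:R) * binomial_pmf n p k).
  apply: eq_bigr => k _; rewrite !natr_ffactSr natrM (natrB _ (leq_ord k)) ffactn0; ring.
by rewrite sum_ffact3_binomial_pmf natr_bin2 !natr_ffactSr; ring.
Qed.

Lemma E_YT_eq : E_YT n p = 'C(n, 2)%:R * p * (1 - p) * (p * (n%:R - 2) + 1).
Proof.
rewrite /E_YT; under eq_bigr => k _.
  under eq_bigr do rewrite natrM -mulrA.
  rewrite -mulr_sumr (sum_pmfYT_rowT _ (leq_ord k)).
  over.
transitivity (\sum_(k < n.+1) ((n%:R - 1) / 2 * (k ^_ 1)%:R + (n%:R - 3) / 2 * (k ^_ 2)%:R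
  + - 2^-1 * (k ^_ 3)%:R) * binomial_pmf n p k).
  apply: eq_bigr => k _; rewrite !natr_ffactSr !natrM (natrB _ (leq_ord k)) ffactn0; ring.
by rewrite sum_ffact3_binomial_pmf natr_bin2 !natr_ffactSr; ring.
Qed.

End JointLaw.

Theorem theorem3 (R : realFieldType) (n : nat) (p : R) :
  0 < p -> p < 1 ->
  E_YT n p = ('C(n, 2))%:R * p * (1 - p) * (p * (n%:R - 2) + 1) /\
  Cov_YT n p = ('C(n, 2))%:R * p * (1 - p) * (1 - 2 * p).
Proof.
move=> _ _; split; first exact: E_YT_eq.
by rewrite /Cov_YT E_YT_eq E_Y_eq E_T_eq; ring.
Qed.
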